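(* Let $T$ be a location measure defined on (the distributions of) all real random variables with finite variance, and suppose $T$ is additive, i.e. $T(x+y)=T(x)+T(y)$ for all independent $x,y$ with finite variances. Suppose $T$ is continuous at $N(0,1)$: whenever $z_n\to_d z\sim N(0,1)$ (with each $z_n$ of finite variance), $T(z_n)\to T(z)=0$. Then $T(x)=E(x)$ for every real random variable $x$ with finite second moment.
   Context: A location measure is a map $T$ from (distributions of) real random variables to $\mathbb{R}$, depending only on the distribution of its argument, such that $T(ax+b)=aT(x)+b$ for all $a,b\in\mathbb{R}$. *)

From HB Require Import structures.
From mathcomp Require Import all_boot all_order all_algebra.
From mathcomp Require Import all_classical all_reals all_analysis.
Set Implicit Arguments. Unset Strict Implicit. Unset Printing Implicit Defensive.
Import Order.TTheory GRing.Theory Num.Theory.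
Import numFieldNormedType.Exports.
Local Open Scope classical_set_scope.
Local Open Scope ring_scope.

(* A distribution of a real random variable = a probability measure on the
   Borel sigma-algebra of R, i.e. on [measurableTypeR R] (the sigma-algebra
   generated by the intervals ]a,b]; the same one used by the library's
   [normal_prob]).  Finite variance <=> finite second moment. *)
Notation BorelR R := (measurableTypeR R).
Notation law R := (probability (measurableTypeR R) R).

Definition finite_var {R : realType} (P : law R) : Prop :=
  (\int[P]_x (((x : R) ^+ 2)%:E) < +oo)%E.

Definition affine_image {R : realType} (P : law R) (a b : R)
  : set R -> \bar R :=
  pushforward P (fun t : BorelR R => (a * t + b : BorelR R)).

(* distribution of x + y for independent x ~ P, y ~ Q : image of the
   product law P (x) Q under addition *)
Definition conv_law {R : realType} (P Q : law R) : set R -> \bar R :=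
  pushforward (P \x Q)%E (fun p : BorelR R * BorelR R => (p.1 + p.2 : BorelR R)).

Definition cvg_in_dist {R : realType} (Pn : nat -> law R) (P : law R) : Prop :=
  forall f : R -> R, continuous f -> (exists M : R, forall x, `|f x| <= M) ->
    (fun n => \int[Pn n]_x f x) @ \oo --> \int[P]_x f x.

Definition std_normal {R : realType} : law R := normal_prob (0 : R) 1.

Definition mean {R : realType} (P : law R) : R := \int[P]_x (x : R).

(* a law viewed as a set function (the argument type of T) *)
Definition dist {R : realType} (P : law R) : set R -> \bar R := fun A => P A.

(* Let T be a location measure that is additive on independent summands
   and continuous at N(0,1), and let P have finite variance; put
   c := T(P) - E(P).  The proof has three ingredients.

   Centre P, then repeatedly replace a law S by the law of
      (S1 + S2)/2, S1, S2 independent copies of S.  By location equivariance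
      and additivity every law S_k in this sequence has T(S_k) = c, while
      E(S_k) = 0 and E(S_k^2) = E(S_0^2)/2^k tends to 0.
   3. Small perturbations.  If the second moments of L_k tend to 0, then
      Z + L_k (independent sum) converges in distribution to Z, for any Z.
   Applying 3 with Z = N(0,1) and L_k = S_k, continuity of T at N(0,1)
   gives T(N) + c = lim T(N + S_k) = T(N), hence c = 0. *)

From HB Require Import structures.
From mathcomp Require Import all_boot all_order all_algebra.
From mathcomp Require Import all_classical all_reals all_analysis.
From mathcomp Require Import measurable_realfun.
From mathcomp Require Import ring lra.
Set Implicit Arguments. Unset Strict Implicit. Unset Printing Implicit Defensive.
Import Order.TTheory GRing.Theory Num.Theory.
Import numFieldNormedType.Exports.
Local Open Scope classical_set_scope.
Local Open Scope ring_scope.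

Section LawOperations.
Context {R : realType}.
Local Notation law := (law R).

Definition affine_map (a b : R) (t : BorelR R) : BorelR R := a * t + b.

Lemma measurable_affine_map a b : measurable_fun setT (affine_map a b).
Proof. by apply: measurable_funD => //; exact: measurable_funM. Qed.

HB.instance Definition _ a b :=
  isMeasurableFun.Build _ _ _ _ (affine_map a b) (measurable_affine_map a b).

Definition sum_map (p : BorelR R * BorelR R) : BorelR R := p.1 + p.2.

Lemma measurable_sum_map : measurable_fun setT sum_map.
Proof. exact: measurable_funD. Qed.

HB.instance Definition _ :=
  isMeasurableFun.Build _ _ _ _ sum_map measurable_sum_map.

Definition aff_law (P : law) (a b : R) : law := distribution P (affine_map a b).
Definition sum_law (P Q : law) : law := distribution (P \x Q)%E sum_map.

Lemma dist_aff_law P a b : dist (aff_law P a b) = affine_image P a b.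
Proof. by []. Qed.

Lemma dist_sum_law P Q : dist (sum_law P Q) = conv_law P Q.
Proof. by []. Qed.

Lemma integral_sum_law_ge0 (P Q : law) (g : R -> \bar R) :
  measurable_fun setT (g : BorelR R -> \bar R) -> (forall x, (0 <= g x)%E) ->
  (\int[sum_law P Q]_x g x = \int[P]_x \int[Q]_y g (x + y)%R)%E.
Proof.
move=> mg g0; rewrite ge0_integral_pushforward// fubini_tonelli1//.
- exact: measurableT_comp.
- by move=> p; exact: g0.
Qed.

End LawOperations.

Section Moments.
Context {R : realType}.
Local Notation law := (law R).

(* Second moment of a law (meaningful when finite). *)
Definition moment2 (L : law) : R := fine (\int[L]_x ((x : R) ^+ 2)%:E).

Lemma normr_le_1Dsqr (x : R) : `|x| <= 1 + x ^+ 2.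
Proof.
have -> : x ^+ 2 = `|x| ^+ 2 by rewrite -normrX ger0_norm ?sqr_ge0.
have := normr_ge0 x; nra.
Qed.

Lemma integral_cst_law (L : law) (c : R) : (\int[L]_x c%:E)%E = c%:E.
Proof.
rewrite integral_cst// [X in (_ * X)%E](_ : _ = 1%E) ?mule1//.
exact: probability_setT.
Qed.

Lemma Rintegral_cst_law (L : law) (c : R) : \int[L]_x c = c.
Proof. by rewrite /Rintegral integral_cst_law. Qed.

Lemma integrable_bounded (L : law) (g : R -> R) (M : R) :
  measurable_fun setT (g : BorelR R -> R) -> (forall x, `|g x| <= M) ->
  L.-integrable setT (fun x : BorelR R => (g x)%:E).
Proof.
move=> mg gM.
apply: (le_integrable measurableT _ _ (finite_measure_integrable_cst L M measurableT)).
- exact/measurable_EFinP.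
- by move=> x _ /=; rewrite !lee_fin (le_trans (gM x)) ?ler_norm.
Qed.

Lemma integrable_sqr (L : law) : finite_var L ->
  L.-integrable setT (fun x : BorelR R => (x ^+ 2)%:E).
Proof.
move=> fv; apply/integrableP; split.
  by apply/measurable_EFinP; exact: exprn_measurable.
under eq_integral => x _ do rewrite gee0_abs ?lee_fin ?sqr_ge0//.
exact: fv.
Qed.

Lemma integrable_quadratic_growth (L : law) (g : R -> R) (a b : R) :
  finite_var L -> measurable_fun setT (g : BorelR R -> R) ->
  (forall x, `|g x| <= a + b * x ^+ 2) ->
  L.-integrable setT (fun x : BorelR R => (g x)%:E).
Proof.
move=> fv mg gb.
apply: (@le_integrable _ _ _ L setT measurableT _
  (fun x : BorelR R => (a + b * x ^+ 2)%:E)).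
- exact/measurable_EFinP.
- by move=> x _ /=; rewrite !lee_fin (le_trans (gb x)) ?ler_norm.
- under eq_fun do rewrite EFinD EFinM.
  apply: integrableD => //; first exact: finite_measure_integrable_cst.
  by apply: integrableZl => //; exact: integrable_sqr.
Qed.

Lemma integrable_id (L : law) : finite_var L ->
  L.-integrable setT (fun x : BorelR R => x%:E).
Proof.
move=> fv; apply: (@integrable_quadratic_growth L id 1 1) => // x.
by rewrite mul1r normr_le_1Dsqr.
Qed.

Lemma integral_sqrE (L : law) : finite_var L ->
  (\int[L]_x ((x : R) ^+ 2)%:E)%E = (moment2 L)%:E.
Proof.
by move=> fv; rewrite fineK//; apply: integrable_fin_num => //; exact: integrable_sqr.
Qed.

Lemma integral_idE (L : law) : finite_var L ->
  (\int[L]_x (x : R)%:E)%E = (mean L)%:E.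
Proof.
by move=> fv; rewrite fineK//; apply: integrable_fin_num => //; exact: integrable_id.
Qed.

Lemma integral_quadratic (L : law) (a b c : R) : finite_var L ->
  (\int[L]_x (a * x ^+ 2 + b * x + c)%:E)%E = (a * moment2 L + b * mean L + c)%:E.
Proof.
move=> fv.
have i2 : L.-integrable setT (fun x : BorelR R => (a * x ^+ 2)%:E).
  under eq_fun do rewrite EFinM.
  by apply: integrableZl => //; exact: integrable_sqr.
have i1 : L.-integrable setT (fun x : BorelR R => (b * x)%:E).
  under eq_fun do rewrite EFinM.
  by apply: integrableZl => //; exact: integrable_id.
have ic := finite_measure_integrable_cst L c measurableT.
under eq_integral do rewrite !EFinD.
rewrite integralD//=; last by apply: integrableD.
rewrite integralD// integral_cst_law.
under eq_integral do rewrite EFinM.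
rewrite integralZl//; last exact: integrable_sqr.
under [X in (_ + X + _)%E]eq_integral do rewrite EFinM.
rewrite integralZl//; last exact: integrable_id.
by rewrite integral_sqrE// integral_idE// -!EFinM -!EFinD.
Qed.

Lemma aff_law_moments (L : law) a b : finite_var L ->
  [/\ finite_var (aff_law L a b),
      moment2 (aff_law L a b) = a ^+ 2 * moment2 L + (2 * a * b) * mean L + b ^+ 2 &
      mean (aff_law L a b) = a * mean L + b].
Proof.
move=> fv.
have E2 : (\int[aff_law L a b]_x ((x : R) ^+ 2)%:E)%E =
    (a ^+ 2 * moment2 L + (2 * a * b) * mean L + b ^+ 2)%:E.
  rewrite ge0_integral_pushforward//; last first.
  - by move=> x _; rewrite lee_fin sqr_ge0.
  - by apply/measurable_EFinP; exact: exprn_measurable.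
  rewrite -integral_quadratic//; apply: eq_integral => x _; congr EFin.
  by rewrite /= (_ : affine_map a b x = a * x + b) //; ring.
have fv' : finite_var (aff_law L a b) by rewrite /finite_var E2 ltry.
split => //; first by rewrite /moment2 E2.
have ia : L.-integrable setT (fun x : BorelR R => (a * x + b)%:E).
  apply: (@integrable_quadratic_growth L _ (`|a| + `|b|) `|a|) => //.
    by apply: measurable_funD => //; exact: measurable_funM.
  move=> x; rewrite (le_trans (ler_normD _ _))// normrM.
  have := normr_le_1Dsqr x; have := normr_ge0 a; have := normr_ge0 x; nra.
have := integral_idE fv'; rewrite integral_pushforward// preimage_setT.
rewrite (_ : (\int[L]_x (EFin \o affine_map a b) x)%E =
             (0 * moment2 L + a * mean L + b)%:E).
  by move=> [<-]; rewrite mul0r add0r.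
rewrite -integral_quadratic//; apply: eq_integral => x _ /=.
by rewrite (_ : affine_map a b x = a * x + b) //; congr EFin; ring.
Qed.

Lemma sum_law_shifted_moment2 (P Q : law) t : finite_var P -> finite_var Q ->
  (\int[sum_law P Q]_w (((w : R) + t) ^+ 2)%:E)%E =
  (moment2 P + (2 * mean Q + 2 * t) * mean P +
   (moment2 Q + 2 * t * mean Q + t ^+ 2))%:E.
Proof.
move=> fP fQ.
rewrite (@integral_sum_law_ge0 _ P Q (fun w => ((w + t) ^+ 2)%:E)); last first.
- by move=> x; rewrite lee_fin sqr_ge0.
- by apply/measurable_EFinP; apply: measurable_funX; exact: measurable_funD.
rewrite -[moment2 P]mul1r -integral_quadratic//.
apply: eq_integral => x _.
transitivity (\int[Q]_y (1 * y ^+ 2 + (2 * (x + t)) * y + (x + t) ^+ 2)%:E)%E.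
  by apply: eq_integral => y _; congr EFin; ring.
by rewrite integral_quadratic//; congr EFin; ring.
Qed.

(* Moments of x + y for independent x, y.  The mean is recovered from the
   second moments of (x + y) and (x + y) + 1. *)
Lemma sum_law_moments (P Q : law) : finite_var P -> finite_var Q ->
  [/\ finite_var (sum_law P Q),
      moment2 (sum_law P Q) = moment2 P + 2 * mean P * mean Q + moment2 Q &
      mean (sum_law P Q) = mean P + mean Q].
Proof.
move=> fP fQ.
have E0 : (\int[sum_law P Q]_w ((w : R) ^+ 2)%:E)%E =
    (moment2 P + 2 * mean P * mean Q + moment2 Q)%:E.
  transitivity (\int[sum_law P Q]_w (((w : R) + 0) ^+ 2)%:E)%E.
    by apply: eq_integral => x _; rewrite addr0.
  by rewrite sum_law_shifted_moment2//; congr EFin; ring.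
have fS : finite_var (sum_law P Q) by rewrite /finite_var E0 ltry.
have m2S : moment2 (sum_law P Q) = moment2 P + 2 * mean P * mean Q + moment2 Q.
  by rewrite /moment2 E0.
split => //.
have := integral_quadratic 1 2 1 fS.
rewrite (_ : (\int[sum_law P Q]_x (1 * x ^+ 2 + 2 * x + 1)%:E)%E =
  (\int[sum_law P Q]_w (((w : R) + 1) ^+ 2)%:E)%E); last first.
  by apply: eq_integral => x _; congr EFin; ring.
rewrite sum_law_shifted_moment2// m2S => -[].
lra.
Qed.

End Moments.

Section Halving.
Context {R : realType}.
Local Notation law := (law R).

Fixpoint halving_law (P : law) (k : nat) : law :=
  if k is k'.+1 then aff_law (sum_law (halving_law P k') (halving_law P k')) 2^-1 0
  else aff_law P 1 (- mean P).

Lemma halving_law_moments (P : law) : finite_var P -> forall k,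
  [/\ finite_var (halving_law P k), mean (halving_law P k) = 0 &
      moment2 (halving_law P k) = moment2 (halving_law P 0) * 2^-1 ^+ k].
Proof.
move=> fP; elim=> [|k [fk mk vk]].
  have [f0 _ m0] := aff_law_moments 1 (- mean P) fP.
  by split => //; [rewrite m0; ring | rewrite expr0 mulr1].
have [fS vS mS] := sum_law_moments fk fk.
have [f1 v1 m1] := aff_law_moments 2^-1 0 fS.
split => //=; first by rewrite m1 mS mk; ring.
by rewrite v1 vS mk vk [in RHS]exprS; field.
Qed.

Lemma halving_law_moment2_cvg0 (P : law) : finite_var P ->
  (fun k => moment2 (halving_law P k)) @ \oo --> 0.
Proof.
move=> fP.
have -> : (fun k => moment2 (halving_law P k)) =
          geometric (moment2 (halving_law P 0)) 2^-1.
  by apply/funext => k; have [_ _ ->] := halving_law_moments fP k.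
by apply: cvg_geometric; rewrite ger0_norm ?invr_ge0// invf_lt1// ?ltr1n.
Qed.

End Halving.

Section StdNormal.
Context {R : realType}.

Lemma integral_std_normal_ge0 (f : R -> \bar R) :
  measurable_fun setT (f : BorelR R -> \bar R) -> (forall x, (0 <= f x)%E) ->
  (\int[std_normal]_x f x =
   \int[lebesgue_measure]_x (f x * (normal_pdf 0 1 x)%:E))%E.
Proof.
move=> mf f0.
have dom := @normal_prob_dominates R 0 1.
rewrite -(@Radon_Nikodym_SigmaFinite.change_of_variables _ _ _
  (std_normal : {finite_measure set _ -> \bar R}) lebesgue_measure dom f setT
  f0 measurableT mf).
have intRN := Radon_Nikodym_SigmaFinite.f_integrable dom.
apply: ae_eq_integral => //.
- by apply: emeasurable_funM => //; exact: (measurable_int lebesgue_measure).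
- by apply: emeasurable_funM => //; apply/measurable_EFinP; exact: measurable_normal_pdf.
- apply: ae_eqe_mul2l; apply: integral_ae_eq => //.
  + by apply/measurable_EFinP; exact: measurable_normal_pdf.
  + by move=> E _ mE; rewrite -Radon_Nikodym_SigmaFinite.f_integral.
Qed.

Lemma mulr_expRN_le1 (y : R) : 0 <= y -> y * expR (- y) <= 1.
Proof.
move=> y0; rewrite expRN ler_pdivrMr ?expR_gt0// mul1r.
by rewrite (le_trans _ (expR_ge1Dx y))// lerDr.
Qed.

Lemma sqr_gauss_le (x : R) :
  x ^+ 2 * expR (- x ^+ 2 / 2) <= 4 * expR (- x ^+ 2 / 4).
Proof.
have -> : - x ^+ 2 / 2 = - (x ^+ 2 / 4) + - x ^+ 2 / 4 by field.
rewrite expRD mulrA ler_wpM2r ?expR_ge0//.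
have -> : x ^+ 2 * expR (- (x ^+ 2 / 4)) =
  4 * ((x ^+ 2 / 4) * expR (- (x ^+ 2 / 4))) by field.
rewrite -[X in _ <= X]mulr1 ler_wpM2l// mulr_expRN_le1//.
by rewrite divr_ge0 ?sqr_ge0.
Qed.

(* N(0,1) has finite variance: x^2 times its density is dominated by a
   multiple of the N(0,2) density, which integrates to 1. *)
Lemma std_normal_finite_var : finite_var (@std_normal R).
Proof.
rewrite /finite_var integral_std_normal_ge0//; last first.
- by move=> x; rewrite lee_fin sqr_ge0.
- by apply/measurable_EFinP; exact: exprn_measurable.
set s := Num.sqrt (2 : R).
have s0 : s != 0 by rewrite sqrtr_eq0 -ltNge.
have s2 : s ^+ 2 = 2 by rewrite sqr_sqrtr.
have p1 := normal_peak_gt0 (oner_neq0 R).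
have ps := normal_peak_gt0 s0.
set c := 4 * normal_peak 1 / normal_peak s.
apply: (@le_lt_trans _ _ (\int[lebesgue_measure]_x (c * normal_pdf 0 s x)%:E)%E).
  apply: ge0_le_integral => //.
  - by move=> x _; rewrite lee_fin mulr_ge0 ?sqr_ge0 ?normal_pdf_ge0.
  - apply/measurable_EFinP; apply: measurable_funM; first exact: exprn_measurable.
    exact: measurable_normal_pdf.
  - by apply/measurable_EFinP; apply: measurable_funM => //; exact: measurable_normal_pdf.
  move=> x _; rewrite lee_fin (normal_pdfE _ s0) (normal_pdfE _ (oner_neq0 R)).
  rewrite /normal_fun !subr0 expr1n s2 /c.
  have -> : (2 : R) *+ 2 = 4 by rewrite mulr2n; lra.
  have -> : 4 * normal_peak 1 / normal_peak s * (normal_peak s * expR (- x ^+ 2 / 4))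
    = normal_peak 1 * (4 * expR (- x ^+ 2 / 4)) by field; rewrite gt_eqF.
  by rewrite mulrCA ler_wpM2l ?(ltW p1)// sqr_gauss_le.
under eq_integral do rewrite EFinM.
rewrite integralZl//; last exact: integrable_normal_pdf.
by rewrite integral_normal_pdf mule1 ltry.
Qed.

End StdNormal.

Section SmallPerturbation.
Context {R : realType}.
Local Notation law := (law R).

Lemma measurable_shift (f : R -> R) (z : R) : continuous f ->
  measurable_fun setT (fun w : BorelR R => f (z + w)).
Proof.
move=> cf; apply: measurableT_comp; first exact: continuous_measurable_fun.
exact: measurable_funD.
Qed.

Lemma shift_dev_le (f : R -> R) (M z eps del : R) :
  (forall x, `|f x| <= M) -> 0 < del -> 0 <= eps ->
  (forall w, `|w| < del -> `|f (z + w) - f z| <= eps) ->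
  forall w, `|f (z + w) - f z| <= eps + 2 * M / del ^+ 2 * w ^+ 2.
Proof.
move=> fM del0 eps0 fd w.
have M0 : 0 <= M by rewrite (le_trans _ (fM 0)).
have c0 : 0 <= 2 * M / del ^+ 2 by rewrite divr_ge0 ?sqr_ge0// mulr_ge0.
have [wd|wd] := ltP `|w| del.
  by rewrite (le_trans (fd _ wd))// lerDl mulr_ge0 ?sqr_ge0//.
have w2 : del ^+ 2 <= w ^+ 2.
  rewrite -(real_normK (num_real w)); have := normr_ge0 w; nra.
have : 2 * M <= 2 * M / del ^+ 2 * w ^+ 2.
  by rewrite mulrAC ler_pdivlMr ?exprn_gt0// ler_wpM2l// mulr_ge0.
have := fM (z + w); have := fM z; have := ler_normB (f (z + w)) (f z); lra.
Qed.

Lemma Rintegral_shift_dev (L : law) (f : R -> R) (M z eps del : R) :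
  finite_var L -> continuous f -> (forall x, `|f x| <= M) -> 0 < del -> 0 <= eps ->
  (forall w, `|w| < del -> `|f (z + w) - f z| <= eps) ->
  `|\int[L]_w f (z + w) - f z| <= eps + 2 * M / del ^+ 2 * moment2 L.
Proof.
move=> fv cf fM del0 eps0 fd.
have M0 : 0 <= M by rewrite (le_trans _ (fM 0)).
set c := 2 * M / del ^+ 2.
have c0 : 0 <= c by rewrite divr_ge0 ?sqr_ge0// mulr_ge0.
have mfz := measurable_shift z cf.
have i1 : L.-integrable setT (EFin \o (fun w => f (z + w))).
  exact: (integrable_bounded _ mfz (fun w => fM (z + w))).
have i2 : L.-integrable setT (EFin \o (fun w => f (z + w) - f z)).
  apply: (@integrable_bounded R L _ (2 * M)); first exact: measurable_funB.
  move=> w; rewrite (le_trans (ler_normB _ _))//.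
  by have := fM (z + w); have := fM z; lra.
have i3 : L.-integrable setT (EFin \o (fun w : BorelR R => c * w ^+ 2 + 0 * w + eps)).
  apply: (integrable_quadratic_growth (a := eps) (b := c)) => //.
    apply: measurable_funD => //; apply: measurable_funD => //.
    exact: measurable_funM.
  move=> w; rewrite mul0r addr0 addrC ger0_norm//.
  by rewrite addr_ge0// mulr_ge0// sqr_ge0.
have -> : \int[L]_w f (z + w) - f z = \int[L]_w (f (z + w) - f z).
  by rewrite RintegralB// ?Rintegral_cst_law//; exact: finite_measure_integrable_cst.
apply: (le_trans (le_normr_Rintegral _ _)) => //.
apply: (@le_trans _ _ (\int[L]_w (c * w ^+ 2 + 0 * w + eps))).
  apply: le_Rintegral => //; first exact: integrable_norm.
  by move=> w _; rewrite /= mul0r addr0 (addrC _ eps); exact: shift_dev_le.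
by rewrite /Rintegral integral_quadratic// mul0r addr0 /= addrC.
Qed.

Lemma Rintegral_shift_cvg (Lk : nat -> law) (f : R -> R) (M z : R) :
  continuous f -> (forall x, `|f x| <= M) -> (forall k, finite_var (Lk k)) ->
  (fun k => moment2 (Lk k)) @ \oo --> 0 ->
  (fun k => \int[Lk k]_w f (z + w)) @ \oo --> f z.
Proof.
move=> cf fM fv mk.
have M0 : 0 <= M by rewrite (le_trans _ (fM 0)).
apply/cvgrPdist_le => eps eps0.
have eps20 : 0 < eps / 2 by rewrite divr_gt0.
have /cvgrPdist_le/(_ _ eps20)/nbhs_ballP[del /= del0 fd] := cf z.
have fd' w : `|w| < del -> `|f (z + w) - f z| <= eps / 2.
  move=> wd; rewrite distrC; apply: fd.
  by rewrite -ball_normE /= opprD addNKr normrN.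
set c := 2 * M / del ^+ 2.
have c0 : 0 <= c by rewrite divr_ge0 ?sqr_ge0// mulr_ge0.
set e := eps / 2 / (c + 1).
have e0 : 0 < e by rewrite !divr_gt0// ltr_wpDl.
have ce : c * e <= eps / 2.
  by rewrite /e mulrA ler_pdivrMr ?ltr_wpDl// mulrDr mulr1 mulrC lerDl ltW.
move: mk => /cvgrPdist_le /(_ _ e0); apply: filterS => k /= mkk.
have mke : moment2 (Lk k) <= e by rewrite (le_trans _ mkk)// sub0r normrN ler_norm.
rewrite distrC (le_trans (Rintegral_shift_dev (fv k) cf fM del0 (ltW eps20) fd'))//.
by have := ler_wpM2l c0 mke; rewrite -/c; lra.
Qed.

Lemma Rintegral_add_bound (L : law) (f : R -> R) (M : R) :
  measurable_fun setT (f : BorelR R -> R) -> (forall x, `|f x| <= M) ->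
  \int[L]_x f x = fine (\int[L]_x (f x + M)%:E)%E - M.
Proof.
move=> mf fM.
rewrite -[fine _]/(\int[L]_x (f x + M)) RintegralD//.
- by rewrite Rintegral_cst_law addrK.
- exact: (integrable_bounded L mf fM).
- exact: finite_measure_integrable_cst.
Qed.

(* For nonnegative bounded continuous g, E[g (z + w)] with z ~ Z, w ~ L_k
   independent tends to E[g z] (Tonelli and dominated convergence). *)
Lemma integral_sum_law_cvg (Z : law) (Lk : nat -> law) (g : R -> R) (M : R) :
  continuous g -> (forall x, 0 <= g x) -> (forall x, g x <= M) ->
  (forall k, finite_var (Lk k)) ->
  (fun k => moment2 (Lk k)) @ \oo --> 0 ->
  (fun k => \int[sum_law Z (Lk k)]_x (g x)%:E)%E @ \oo --> (\int[Z]_x (g x)%:E)%E.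
Proof.
move=> cg g0 gM fv mk.
have gnorm x : `|g x| <= M by rewrite ger0_norm ?gM ?g0.
have mg : measurable_fun setT (g : BorelR R -> R) := continuous_measurable_fun cg.
have mgE : measurable_fun setT (fun x : BorelR R => (g x)%:E).
  exact/measurable_EFinP.
have g0E x : (0 <= (g x)%:E)%E by rewrite lee_fin.
under eq_fun do rewrite (integral_sum_law_ge0 _ _ mgE g0E).
apply: (@dominated_cvg _ _ _ Z setT measurableT _ _ (fun _ => M%:E)).
- move=> k; apply: (@measurable_fun_fubini_tonelli_F _ _ _ _ _ (Lk k)
     (fun p : BorelR R * BorelR R => (g (p.1 + p.2))%:E)) => //.
  apply/measurable_EFinP; apply: measurableT_comp => //.
  exact: measurable_sum_map.
- move=> z _; apply: cvg_EFin.
    apply: nearW => k; apply: integrable_fin_num => //.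
    exact: (integrable_bounded _ (measurable_shift z cg) (fun w => gnorm (z + w))).
  exact: (Rintegral_shift_cvg cg gnorm fv mk).
- by [].
- exact: finite_measure_integrable_cst.
- move=> k z _.
  rewrite gee0_abs; last by apply: integral_ge0 => y _; rewrite lee_fin.
  rewrite -(integral_cst_law (Lk k) M); apply: ge0_le_integral => //.
  + by apply/measurable_EFinP; exact: measurable_shift.
  + by move=> y _; rewrite lee_fin.
Qed.

Lemma cvg_in_dist_sum_law (Z : law) (Lk : nat -> law) :
  (forall k, finite_var (Lk k)) -> (fun k => moment2 (Lk k)) @ \oo --> 0 ->
  cvg_in_dist (fun k => sum_law Z (Lk k)) Z.
Proof.
move=> fv mk f cf [M fM].
have mf : measurable_fun setT (f : BorelR R -> R) := continuous_measurable_fun cf.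
rewrite (Rintegral_add_bound _ mf fM).
under eq_fun do rewrite (Rintegral_add_bound _ mf fM).
apply: cvgB; last exact: cvg_cst.
have fM0 x : 0 <= f x + M by have := fM x; rewrite ler_norml => /andP[? ?]; lra.
have fM2 x : f x + M <= 2 * M by have := fM x; rewrite ler_norml => /andP[? ?]; lra.
apply: fine_cvg; rewrite fineK; last first.
  apply: integrable_fin_num => //; apply: (@integrable_bounded R Z _ (2 * M)).
    exact: measurable_funD.
  by move=> x; rewrite ger0_norm.
apply: (integral_sum_law_cvg (M := 2 * M)) => //.
by move=> x; apply: cvgD; [exact: cf | exact: cvg_cst].
Qed.

End SmallPerturbation.

Section LocationMeasure.
Context {R : realType}.
Variable T : (set R -> \bar R) -> R.
Hypothesis T_affine : forall (P : law R) (a b : R), finite_var P ->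
  T (affine_image P a b) = a * T (dist P) + b.
Hypothesis T_additive : forall P Q : law R, finite_var P -> finite_var Q ->
  T (conv_law P Q) = T (dist P) + T (dist Q).

Lemma T_halving_law (P : law R) : finite_var P ->
  forall k, T (dist (halving_law P k)) = T (dist P) - mean P.
Proof.
move=> fP; elim=> [|k IH]; first by rewrite /= dist_aff_law T_affine// mul1r.
have [fk _ _] := halving_law_moments fP k.
have [fS _ _] := sum_law_moments fk fk.
rewrite /= dist_aff_law T_affine// dist_sum_law T_additive// IH addr0.
by field.
Qed.

End LocationMeasure.

Theorem theorem1 (R : realType) (T : (set R -> \bar R) -> R)
  (Hloc : forall (P : law R) (a b : R), finite_var P ->
     T (affine_image P a b) = a * T (dist P) + b)
  (Hadd : forall P Q : law R, finite_var P -> finite_var Q ->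
     T (conv_law P Q) = T (dist P) + T (dist Q))
  (Hcont : forall Pn : nat -> law R,
     (forall n, finite_var (Pn n)) -> cvg_in_dist Pn std_normal ->
     (fun n => T (dist (Pn n))) @ \oo --> T (dist std_normal)) :
  forall P : law R, finite_var P -> T (dist P) = mean P.
Proof.
move=> P fP.
set c := T (dist P) - mean P.
have fS k : finite_var (halving_law P k) by have [] := halving_law_moments fP k.
have fN : finite_var (@std_normal R) := std_normal_finite_var.
pose Z k := sum_law std_normal (halving_law P k).
have fZ k : finite_var (Z k) by have [] := sum_law_moments fN (fS k).
(* Along Z k = N + S_k the value of T is constantly T(N) + c ... *)
have TZ : (fun k => T (dist (Z k))) = fun=> T (dist std_normal) + c.
  apply/funext => k.
  by rewrite dist_sum_law Hadd// (T_halving_law Hloc Hadd fP).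
(* ... while Z k -> N in distribution, so it also tends to T(N). *)
have HZ := Hcont Z fZ (cvg_in_dist_sum_law fS (halving_law_moment2_cvg0 fP)).
rewrite TZ in HZ.
have eqTN : T (dist std_normal) + c = T (dist std_normal).
  exact: (cvg_unique (@Rhausdorff R) (cvg_cst _) HZ).
by move: eqTN; rewrite /c; lra.
Qed.
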